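(* In any probabilistic theory that supports universal self-steering, every irreducible finite-dimensional state space in the theory is homogeneous and weakly self-dual.
   Context: An abstract state space (system) is a pair $(A,u_A)$ where $A$ is a finite-dimensional real vector space with a closed, pointed, generating convex cone $A_+$, and $u_A$ is an interior point of the dual cone $A^*_+$; states are elements of $A_+$ with $u_A=1$. For systems $A,B$, $A\otimes_{\max}B$ (resp. $A\otimes_{\min}B$) is the space of bilinear forms on $A^*\times B^*$ ordered by the cone of forms nonnegative on $A^*_+\times B^*_+$ (resp. the cone generated by products $\alpha\otimes\beta$, $\alpha\in A_+,\beta\in B_+$), with order unit $u_A\otimes u_B$; a composite $AB$ is this vector space with any cone between these two. A probabilistic theory is a class of finite-dimensional abstract state spaces closed under formation of such composites. For a bipartite state $\omega$ on $AB$, $\hat\omega:A^*\to B$ is $\hat\omega(a)(b)=\omega(a,b)$ and $\omega^B=\hat\omega(u_A)$. An observable on $A$ is a finite family $a_i\in A^*_+$ with $\sum_ia_i=u_A$; an ensemble for $\beta\in B_+$ is a finite family $\beta_i\in B_+$ with $\sum_i\beta_i=\beta$; $\omega$ steers its $B$-marginal if every ensemble for $\omega^B$ equals $\{\hat\omega(x_i)\}$ for some observable $\{x_i\}$ on $A$. The theory supports universal self-steering if for every system $A$ in the theory and every state $\alpha$ of $A$ there is a state $\omega$ on a composite $AA$ of two copies of $A$ whose (second) marginal is $\alpha$ and which steers that marginal. A state space is irreducible if it is not an ordered direct sum of two nonzero ordered subspaces; homogeneous if its order-automorphism group acts transitively on the interior of its positive cone; weakly self-dual if there is an order-isomorphism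 (linear bijection preserving positivity in both directions) $A^*\to A$. *)

From HB Require Import structures.
From mathcomp Require Import all_boot all_order all_algebra.
From mathcomp Require Import reals.
Set Implicit Arguments. Unset Strict Implicit. Unset Printing Implicit Defensive.
Import Order.TTheory GRing.Theory Num.Theory.
Local Open Scope ring_scope.

(* Conventions: an n-dimensional real vector space A is represented by
   'rV[R]_n; its dual A^* is also represented by 'rV[R]_n via the standard
   pairing <f, x> = \sum_i f_i x_i.  Linear maps are matrices acting on the
   right (x |-> x *m M). *)

Section StateSpaces.
Variable R : realType.

Definition pairing n (f x : 'rV[R]_n) : R := \sum_(i < n) f 0 i * x 0 i.

Definition supdist n (x y : 'rV[R]_n) : R :=
  \big[Num.max/0]_(i < n) `|x 0 i - y 0 i|.

Definition is_closed n (K : 'rV[R]_n -> Prop) : Prop :=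
  forall x, ~ K x -> exists2 e : R, 0 < e & forall y, supdist x y < e -> ~ K y.

Definition interior n (K : 'rV[R]_n -> Prop) (x : 'rV[R]_n) : Prop :=
  exists2 e : R, 0 < e & forall y, supdist x y < e -> K y.

Definition convex_cone n (K : 'rV[R]_n -> Prop) : Prop :=
  [/\ K 0, (forall x y, K x -> K y -> K (x + y))
    & (forall (t : R) x, 0 <= t -> K x -> K (t *: x))].

Definition pointed n (K : 'rV[R]_n -> Prop) : Prop :=
  forall x, K x -> K (- x) -> x = 0.

Definition generating n (K : 'rV[R]_n -> Prop) : Prop :=
  forall x, exists a b, [/\ K a, K b & x = a - b].

Definition dual_cone n (K : 'rV[R]_n -> Prop) : 'rV[R]_n -> Prop :=
  fun f => forall x, K x -> 0 <= pairing f x.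

Definition is_sys n (K : 'rV[R]_n -> Prop) (u : 'rV[R]_n) : Prop :=
  [/\ is_closed K, convex_cone K, pointed K, generating K
    & interior (dual_cone K) u].

Definition is_state n (K : 'rV[R]_n -> Prop) (u x : 'rV[R]_n) : Prop :=
  K x /\ pairing u x = 1.

(* Bilinear forms on A^* x B^* are n x m matrices, stored vectorized
   (mxvec) in 'rV_(n*m); w(f,g) = f *m (vec_mx w) *m g^T.
   The elementary tensor a (x) b is the form (f,g) |-> <f,a><g,b>. *)
Definition tens n m (a : 'rV[R]_n) (b : 'rV[R]_m) : 'rV[R]_(n * m) :=
  mxvec (a^T *m b).

Definition bil n m (w : 'rV[R]_(n * m)) (f : 'rV[R]_n) (g : 'rV[R]_m) : R :=
  (f *m vec_mx w *m g^T) 0 0.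

Definition min_tensor n m (KA : 'rV[R]_n -> Prop) (KB : 'rV[R]_m -> Prop)
  : 'rV[R]_(n * m) -> Prop :=
  fun w => exists k (a : 'I_k -> 'rV[R]_n) (b : 'I_k -> 'rV[R]_m),
    [/\ forall i, KA (a i), forall i, KB (b i)
      & w = \sum_(i < k) tens (a i) (b i)].

Definition max_tensor n m (KA : 'rV[R]_n -> Prop) (KB : 'rV[R]_m -> Prop)
  : 'rV[R]_(n * m) -> Prop :=
  fun w => forall f g, dual_cone KA f -> dual_cone KB g -> 0 <= bil w f g.

Definition is_composite n m (KA : 'rV[R]_n -> Prop) (uA : 'rV[R]_n)
  (KB : 'rV[R]_m -> Prop) (uB : 'rV[R]_m) (KC : 'rV[R]_(n * m) -> Prop) : Prop :=
  [/\ is_sys KC (tens uA uB),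
      (forall w, min_tensor KA KB w -> KC w)
    & (forall w, KC w -> max_tensor KA KB w)].

Definition hat n m (w : 'rV[R]_(n * m)) (a : 'rV[R]_n) : 'rV[R]_m :=
  a *m vec_mx w.

Definition marginalB n m (uA : 'rV[R]_n) (w : 'rV[R]_(n * m)) : 'rV[R]_m :=
  hat w uA.

Definition observable n (KA : 'rV[R]_n -> Prop) (uA : 'rV[R]_n) k
  (x : 'I_k -> 'rV[R]_n) : Prop :=
  (forall i, dual_cone KA (x i)) /\ \sum_(i < k) x i = uA.

Definition ensemble m (KB : 'rV[R]_m -> Prop) (beta : 'rV[R]_m) k
  (b : 'I_k -> 'rV[R]_m) : Prop :=
  (forall i, KB (b i)) /\ \sum_(i < k) b i = beta.

Definition steers n m (KA : 'rV[R]_n -> Prop) (uA : 'rV[R]_n)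
  (KB : 'rV[R]_m -> Prop) (w : 'rV[R]_(n * m)) : Prop :=
  forall k (b : 'I_k -> 'rV[R]_m), ensemble KB (marginalB uA w) b ->
    exists x : 'I_k -> 'rV[R]_n, observable KA uA x /\ forall i, hat w (x i) = b i.

Definition theory := forall n : nat, ('rV[R]_n -> Prop) -> 'rV[R]_n -> Prop.

Definition prob_theory (Th : theory) : Prop :=
  (forall n K u, Th n K u -> is_sys K u) /\
  (forall n K u m L v, Th n K u -> Th m L v ->
     exists C, is_composite K u L v C /\ Th (n * m)%N C (tens u v)).

Definition universal_self_steering (Th : theory) : Prop :=
  forall n K u, Th n K u -> forall alpha, is_state K u alpha ->
    exists C w, [/\ is_composite K u K u C, Th (n * n)%N C (tens u u),
                    is_state C (tens u u) w, marginalB u w = alpha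
                  & steers K u K w].

Definition subspace n (S : 'rV[R]_n -> Prop) : Prop :=
  [/\ S 0, (forall x y, S x -> S y -> S (x + y))
    & (forall (t : R) x, S x -> S (t *: x))].

Definition ordered_direct_sum n (K S1 S2 : 'rV[R]_n -> Prop) : Prop :=
  [/\ subspace S1, subspace S2,
      (forall x, S1 x -> S2 x -> x = 0),
      (forall x, exists x1 x2, [/\ S1 x1, S2 x2 & x = x1 + x2])
    & (forall x, K x <-> exists x1 x2,
          [/\ S1 x1, K x1, S2 x2, K x2 & x = x1 + x2])].

Definition irreducible n (K : 'rV[R]_n -> Prop) : Prop :=
  ~ exists S1 S2, [/\ ordered_direct_sum K S1 S2,
                      (exists x, S1 x /\ x <> 0) & (exists x, S2 x /\ x <> 0)].

Definition order_automorphism n (K : 'rV[R]_n -> Prop) (M : 'M[R]_n) : Prop :=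
  M \in unitmx /\ forall x, K x <-> K (x *m M).

Definition homogeneous n (K : 'rV[R]_n -> Prop) : Prop :=
  forall x y, interior K x -> interior K y ->
    exists M, order_automorphism K M /\ x *m M = y.

Definition weakly_self_dual n (K : 'rV[R]_n -> Prop) : Prop :=
  exists M : 'M[R]_n, M \in unitmx /\ forall f, dual_cone K f <-> K (f *m M).

End StateSpaces.

(* A steering state w whose marginal a lies in the interior of A_+ yields the
   linear map w^ : A^* -> A.  Since w is positive on A^*_+ x A^*_+, the
   separation theorem for closed cones shows that w^ maps A^*_+ into A_+;
   steering the two-element ensemble {t b, a - t b} shows that every b in A_+
   is the image of a positive functional.  So w^ is an order isomorphism
   A^* -> A with w^(u) = a, whence weak self-duality.  For two interior states
   a, b the composite w^_b o w^_a^-1 is an order automorphism of A carrying a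
   to b, and rescaling reaches arbitrary interior points. *)
From Pilot Require Import Defs.
From mathcomp Require Import all_boot all_order all_algebra reals.
From mathcomp Require Import all_classical all_analysis.
From mathcomp Require Import ring lra.
Import Defs.
Set Implicit Arguments. Unset Strict Implicit. Unset Printing Implicit Defensive.
Import Order.TTheory GRing.Theory Num.Theory.
Import numFieldNormedType.Exports.
Local Open Scope ring_scope.

Section Pairing.
Variable R : realType.
Implicit Types n : nat.

Lemma pairingE n (f x : 'rV[R]_n) : pairing f x = (f *m x^T) 0 0.
Proof. by rewrite /pairing mxE; apply: eq_bigr => i _; rewrite mxE. Qed.

Lemma pairingC n (f x : 'rV[R]_n) : pairing f x = pairing x f.
Proof. by rewrite /pairing; apply: eq_bigr => i _; rewrite mulrC. Qed.

Lemma pairingDl n (f g x : 'rV[R]_n) :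
  pairing (f + g) x = pairing f x + pairing g x.
Proof. by rewrite !pairingE mulmxDl mxE. Qed.

Lemma pairingZl n (t : R) (f x : 'rV[R]_n) : pairing (t *: f) x = t * pairing f x.
Proof. by rewrite !pairingE -scalemxAl mxE. Qed.

Lemma pairingNl n (f x : 'rV[R]_n) : pairing (- f) x = - pairing f x.
Proof. by rewrite -scaleN1r pairingZl mulN1r. Qed.

Lemma pairingBl n (f g x : 'rV[R]_n) :
  pairing (f - g) x = pairing f x - pairing g x.
Proof. by rewrite pairingDl pairingNl. Qed.

Lemma pairingDr n (f g x : 'rV[R]_n) :
  pairing x (f + g) = pairing x f + pairing x g.
Proof. by rewrite pairingC pairingDl !(pairingC x). Qed.

Lemma pairingZr n (t : R) (f x : 'rV[R]_n) : pairing x (t *: f) = t * pairing x f.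
Proof. by rewrite pairingC pairingZl (pairingC x). Qed.

Lemma pairingNr n (f x : 'rV[R]_n) : pairing x (- f) = - pairing x f.
Proof. by rewrite pairingC pairingNl (pairingC x). Qed.

Lemma pairingBr n (f g x : 'rV[R]_n) :
  pairing x (f - g) = pairing x f - pairing x g.
Proof. by rewrite pairingDr pairingNr. Qed.

Lemma sqr_coord_le_pairing n (x : 'rV[R]_n) i : x 0 i * x 0 i <= pairing x x.
Proof.
rewrite /pairing (bigD1 i) //= lerDl; apply: sumr_ge0 => j _.
by rewrite -expr2 sqr_ge0.
Qed.

Lemma pairing_self_ge0 n (x : 'rV[R]_n) : 0 <= pairing x x.
Proof. by apply: sumr_ge0 => i _; rewrite -expr2 sqr_ge0. Qed.

Lemma pairing_self_gt0 n (x : 'rV[R]_n) : x != 0 -> 0 < pairing x x.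
Proof.
move=> x0; rewrite lt_neqAle pairing_self_ge0 andbT eq_sym.
apply: contra x0 => /eqP x2_0; apply/eqP/rowP => i; rewrite mxE.
have := sqr_coord_le_pairing x i; rewrite x2_0 -expr2 => xi2_le0.
by apply/eqP; rewrite -sqrf_eq0 eq_le xi2_le0 sqr_ge0.
Qed.

Lemma bilE n m (w : 'rV[R]_(n * m)) f g : bil w f g = pairing g (hat w f).
Proof. by rewrite /bil /hat pairingC pairingE. Qed.

Definition sqdist n (x y : 'rV[R]_n) : R := pairing (x - y) (x - y).

Lemma sqdist_addZ n (z c d : 'rV[R]_n) t :
  sqdist z (c + t *: d) =
  sqdist z c - 2 * t * pairing (z - c) d + t * t * pairing d d.
Proof.
rewrite /sqdist opprD addrA; move: (z - c) => v.
rewrite pairingBl !pairingBr !pairingZl !pairingZr (pairingC d); ring.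
Qed.

End Pairing.

Section Cones.
Variables (R : realType) (n : nat) (K : 'rV[R]_n -> Prop).
Hypothesis Kcone : convex_cone K.

Lemma cone_sum k (F : 'I_k -> 'rV[R]_n) : (forall i, K (F i)) -> K (\sum_(i < k) F i).
Proof. by case: Kcone => K0 KD _ KF; elim/big_ind: _ => //. Qed.

Lemma cone_scale_iff (s : R) x : 0 < s -> K (s *: x) <-> K x.
Proof.
case: Kcone => _ _ KZ s0; split; last by apply: KZ; exact: ltW.
move=> Ksx; rewrite -[x](scalerK (lt0r_neq0 s0)).
by apply: KZ => //; rewrite invr_ge0 ltW.
Qed.

Lemma dual_coneZ (s : R) f : 0 <= s -> dual_cone K f -> dual_cone K (s *: f).
Proof. by move=> s0 Kf x Kx; rewrite pairingZl mulr_ge0 //; exact: Kf. Qed.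

End Cones.

Section SupDistance.
Variable R : realType.
Implicit Types n : nat.

Lemma supdist_ltP n (x y : 'rV[R]_n) e : 0 < e ->
  supdist x y < e <-> forall i, `|x 0 i - y 0 i| < e.
Proof.
move=> e0; rewrite /supdist; split; first by move/bigmax_ltP => [_ H] i; exact: H.
by move=> H; apply/bigmax_ltP; split.
Qed.

Lemma supdist_refl_lt n (x : 'rV[R]_n) e : 0 < e -> supdist x x < e.
Proof. by move=> e0; apply/supdist_ltP => // i; rewrite subrr normr0. Qed.

Lemma supdist_small_step n (y : 'rV[R]_n) e : 0 < e ->
  exists2 t : R, 0 < t &
    forall x, supdist x (x + t *: y) < e /\ supdist x (x - t *: y) < e.
Proof.
move=> e0; set S := \sum_(i < n) `|y 0 i|.
have S0 : 0 <= S by apply: sumr_ge0.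
have t0 : 0 < e / (1 + S) by apply: divr_gt0 => //; lra.
have step_lt i : `|e / (1 + S) * y 0 i| < e.
  have yi_le : `|y 0 i| <= S by rewrite /S (bigD1 i) //= lerDl sumr_ge0.
  rewrite normrM gtr0_norm // mulrAC ltr_pdivrMr; last lra.
  by rewrite ltr_pM2l //; lra.
exists (e / (1 + S)) => // x; split; apply/supdist_ltP => // i; rewrite !mxE.
- by rewrite opprD addrA subrr add0r normrN.
- by rewrite opprB addrC subrK.
Qed.

Lemma supdist_lt_of_norm n (x y : 'rV[R]_n) e : 0 < e ->
  `|x - y| < e -> supdist x y < e.
Proof.
move=> e0; rewrite [X in X < _]/Num.Def.normr /= mx_normrE => /bigmax_ltP [_ H].
apply/supdist_ltP => // i; have := H (ord0, i) isT; rewrite /= !mxE.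
by have -> : (0 : 'I_1) = ord0 by apply/val_inj.
Qed.

End SupDistance.

Section Separation.
Variable R : realType.
Local Open Scope classical_set_scope.

Lemma is_closed_closed n (K : 'rV[R]_n -> Prop) : is_closed K -> closed K.
Proof.
move=> Kcl; rewrite -[K]setCK; apply: open_closedC; rewrite openE => x nKx.
have [e e0 He] := Kcl x nKx.
apply/nbhs_ballP; exists e => // y; rewrite -ball_normE /ball_ /= => xy.
exact/He/supdist_lt_of_norm.
Qed.

Lemma compact_box n (z : 'rV[R]_n) r :
  compact [set v : 'rV[R]_n | forall i, `[z ord0 i - r, z ord0 i + r] (v ord0 i)].
Proof.
apply: (@rV_compact _ _ (fun i => `[z ord0 i - r, z ord0 i + r])) => i.
exact: segment_compact.
Qed.

Lemma continuous_sqdist n (z : 'rV[R]_n) : continuous (sqdist z).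
Proof.
have coord_c i : continuous (fun y : 'rV[R]_n => (z - y) 0 i).
  have -> : (fun y : 'rV[R]_n => (z - y) 0 i) = (fun y => z 0 i - y 0 i).
    by apply: funext => v; rewrite !mxE.
  by move=> x; apply: continuousB; [exact: cst_continuous | exact: coord_continuous].
move=> y; apply: cvg_big => [||i _]; [exact: add_continuous | exact: nbhs_filter |].
exact: continuousM (coord_c i y) (coord_c i y).
Qed.

(* Outside the box of radius r := 1 + sqdist z y0 around z, sqdist z exceeds
   its value at y0, so the minimum over K is attained on the compact part. *)
Lemma closed_nearest_point n (K : 'rV[R]_n -> Prop) z y0 : is_closed K -> K y0 ->
  exists2 c, K c & forall w, K w -> sqdist z c <= sqdist z w.
Proof.
move=> Kcl Ky0; set r := 1 + sqdist z y0.
have d0 : 0 <= sqdist z y0 := pairing_self_ge0 (z - y0).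
pose B := [set v : 'rV[R]_n | forall i, `[z ord0 i - r, z ord0 i + r] (v ord0 i)].
have ord0E : (0 : 'I_1) = ord0 by apply/val_inj.
have in_box w : sqdist z w <= sqdist z y0 -> B w.
  move=> wle i; rewrite /= in_itv /=; have := sqr_coord_le_pairing (z - w) i.
  rewrite -/(sqdist z w) !mxE ord0E /r => sq_le; apply/andP; split; nra.
have BK_compact : compact (B `&` K).
  by apply: compact_closedI; [exact: compact_box | exact: is_closed_closed].
have sqdist_cont : {within B `&` K, continuous (sqdist z)}.
  by apply: continuous_subspaceT; exact: continuous_sqdist.
have [c] := EVT_min_rV (ex_intro _ y0 (conj (in_box _ (lexx _)) Ky0)) BK_compact
  sqdist_cont.
rewrite in_setE => -[_ Kc] c_min; exists c => // w Kw.
have c_le := c_min y0 (mem_set (conj (in_box _ (lexx _)) Ky0)).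
have [w_le|w_gt] := leP (sqdist z w) (sqdist z y0); last exact: le_trans c_le (ltW w_gt).
by apply: c_min; rewrite in_setE; split => //; exact: in_box.
Qed.

Lemma small_quadratic_neg (a b : R) : 0 < a -> 0 <= b ->
  exists t, [/\ 0 < t, t <= 1 & t * t * b - 2 * t * a < 0].
Proof.
move=> a0 b0; set d := a + b + 1; have d0 : 0 < d by rewrite /d; lra.
have t0 : 0 < a / d by exact: divr_gt0.
exists (a / d); split => //; first by rewrite ler_pdivrMr // mul1r /d; lra.
have td : a / d * d = a by rewrite divfK // gt_eqF.
move: td t0; rewrite /d; set t := a / _; nra.
Qed.

Lemma nearest_point_obtuse n (K : 'rV[R]_n -> Prop) z c d :
  (forall w, K w -> sqdist z c <= sqdist z w) ->
  (forall t, 0 < t -> t <= 1 -> K (c + t *: d)) -> pairing (z - c) d <= 0.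
Proof.
move=> c_min Kd; rewrite leNgt; apply/negP => a0.
have [t [t0 t1 tq]] := small_quadratic_neg a0 (pairing_self_ge0 d).
by have := c_min _ (Kd t t0 t1); rewrite sqdist_addZ; lra.
Qed.

Lemma cone_separation n (K : 'rV[R]_n -> Prop) z :
  is_closed K -> convex_cone K -> ~ K z ->
  exists2 g, dual_cone K g & pairing g z < 0.
Proof.
move=> Kcl Kcone nKz; have [K0 KD KZ] := Kcone.
have [c Kc c_min] := closed_nearest_point z Kcl K0.
have v0 : z - c != 0 by apply/eqP => /eqP; rewrite subr_eq0 => /eqP zc; rewrite zc in nKz.
have c_normal k : K k -> pairing (z - c) k <= 0.
  move=> Kk; apply: nearest_point_obtuse c_min _ => t t0 _.
  by apply: KD => //; apply: KZ => //; exact: ltW.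
have c_perp : 0 <= pairing (z - c) c.
  rewrite -oppr_le0 -pairingNr; apply: nearest_point_obtuse c_min _ => t _ t1.
  by rewrite scalerN -scaleNr -{1}[c]scale1r -scalerDl; apply: KZ; rewrite ?subr_ge0.
exists (c - z); first by move=> k Kk; rewrite -opprB pairingNl oppr_ge0 c_normal.
rewrite -opprB pairingNl -{2}(subrK c z) pairingDr.
by have := pairing_self_gt0 v0; lra.
Qed.

End Separation.

Section Interior.
Variables (R : realType) (n : nat) (K : 'rV[R]_n -> Prop).

Lemma interior_sub c : interior K c -> K c.
Proof. by case=> e e0 He; apply: He; exact: supdist_refl_lt. Qed.

Lemma interiorZ c (s : R) : convex_cone K -> interior K c -> 0 < s -> interior K (s *: c).
Proof.
move=> Kcone [e e0 He] s0; exists (s * e) => [|y /supdist_ltP sy].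
  exact: mulr_gt0.
have si0 : 0 < s^-1 by rewrite invr_gt0.
apply/(cone_scale_iff Kcone y si0)/He/supdist_ltP => // i.
have := sy (mulr_gt0 s0 e0) i; rewrite !mxE.
have -> : c 0 i - s^-1 * y 0 i = s^-1 * (s * c 0 i - y 0 i).
  by rewrite mulrBr mulrA mulVf ?gt_eqF // mul1r.
by rewrite normrM gtr0_norm ?invr_gt0 // ltr_pdivrMl.
Qed.

(* Writing each basis vector e_i = a_i - b_i with a_i, b_i in K, the point
   \sum_i (a_i + b_i) absorbs every perturbation of sup-size < 1. *)
Lemma interior_nonempty : convex_cone K -> generating K -> exists c, interior K c.
Proof.
move=> Kcone Kgen; have [_ KD KZ] := Kcone.
have basis_split i : exists ab : 'rV[R]_n * 'rV[R]_n,
    [/\ K ab.1, K ab.2 & 'e_i = ab.1 - ab.2].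
  by have [a [b [Ka Kb E]]] := Kgen 'e_i; exists (a, b).
have [F HF] := choice basis_split.
set c := \sum_(i < n) ((F i).1 + (F i).2); exists c; exists 1 => // y cy.
pose d i := (y - c) 0 i.
have d_lt i : `|d i| < 1.
  by move/supdist_ltP: cy => /(_ ltr01 i); rewrite /d !mxE distrC.
have -> : y = \sum_(i < n) ((1 + d i) *: (F i).1 + (1 - d i) *: (F i).2).
  have y_c := row_sum_delta (y - c).
  have -> : y = c + \sum_(j < n) d j *: 'e_j by rewrite -y_c addrC subrK.
  rewrite /c -big_split; apply: eq_bigr => i _; have [_ _ ->] := HF i.
  by apply/rowP => j; rewrite !mxE; ring.
apply: cone_sum => // i; have [Ka Kb _] := HF i; have := d_lt i.
by rewrite ltr_norml => /andP[? ?]; apply: KD; apply: KZ => //; lra.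
Qed.

End Interior.

Section StateSpace.
Variables (R : realType) (n : nat) (K : 'rV[R]_n.+1 -> Prop) (u : 'rV[R]_n.+1).
Hypothesis Ksys : is_sys K u.

Lemma zero_not_interior : ~ interior K 0.
Proof.
have [_ _ Kp _ _] := Ksys; case=> e e0 He.
have [t t0 Ht] := supdist_small_step ('e_ord0 : 'rV[R]_n.+1) e0.
have [h1 h2] := Ht 0; have K1 := He _ h1; have K2 := He _ h2.
rewrite add0r in K1; rewrite sub0r in K2.
have := Kp _ K1 K2 => /rowP /(_ ord0); rewrite !mxE eqxx mulr1 => t_eq0.
by move: t0; rewrite t_eq0 ltxx.
Qed.

Lemma unit_pairing_gt0 x : K x -> x != 0 -> 0 < pairing u x.
Proof.
move=> Kx x0; have [_ _ _ _ [e e0 He]] := Ksys.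
have [t t0 Ht] := supdist_small_step x e0.
have := He _ (Ht u).2 x Kx; rewrite pairingBl pairingZl.
by have := pairing_self_gt0 x0; nra.
Qed.

Lemma interior_normalize x : interior K x ->
  exists2 s : R, 0 < s & interior K (s^-1 *: x) /\ pairing u (s^-1 *: x) = 1.
Proof.
move=> Kx; have [_ Kcone _ _ _] := Ksys.
have x0 : x != 0 by apply/eqP => x0; apply: zero_not_interior; rewrite -x0.
have s0 := unit_pairing_gt0 (interior_sub Kx) x0.
exists (pairing u x) => //; split; first by apply: interiorZ; rewrite ?invr_gt0.
by rewrite pairingZr mulVf ?gt_eqF.
Qed.

Lemma interior_state_exists : exists a, interior K a /\ pairing u a = 1.
Proof.
have [_ Kcone _ Kgen _] := Ksys; have [c Kc] := interior_nonempty Kcone Kgen.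
by have [s _ a_state] := interior_normalize Kc; exists (s^-1 *: c).
Qed.

End StateSpace.

Definition dual_order_iso (R : realType) n (K : 'rV[R]_n -> Prop) (M : 'M[R]_n) :=
  M \in unitmx /\ forall f, dual_cone K f <-> K (f *m M).

Section OrderIsomorphisms.
Variables (R : realType) (n : nat) (K : 'rV[R]_n -> Prop).

Lemma dual_order_iso_automorphism Ma Mb :
  dual_order_iso K Ma -> dual_order_iso K Mb -> order_automorphism K (invmx Ma *m Mb).
Proof.
move=> [Ma_u HMa] [Mb_u HMb]; split; first by rewrite unitmx_mul unitmx_inv Ma_u.
by move=> x; rewrite mulmxA -HMb HMa mulmxKV.
Qed.

Lemma order_automorphismZ (s : R) M : convex_cone K -> 0 < s ->
  order_automorphism K M -> order_automorphism K (s *: M).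
Proof.
move=> Kcone s0 [M_u HM]; split.
  by rewrite unitmxZ // unitfE gt_eqF.
by move=> x; rewrite -scalemxAr cone_scale_iff // HM.
Qed.

Lemma generating_surj_unitmx (M : 'M[R]_n) : generating K ->
  (forall y, K y -> exists f, f *m M = y) -> M \in unitmx.
Proof.
move=> Kgen Msurj; rewrite -row_full_unit -sub1mx; apply/row_subP => i.
have [a [b [Ka Kb ->]]] := Kgen (row i 1%:M).
have [fa <-] := Msurj _ Ka; have [fb <-] := Msurj _ Kb.
by rewrite -mulmxBl submxMl.
Qed.

End OrderIsomorphisms.

Lemma homogeneous_of_dual_isos (R : realType) n (K : 'rV[R]_n.+1 -> Prop) u :
  is_sys K u ->
  (forall a, interior K a -> pairing u a = 1 ->
     exists2 M, dual_order_iso K M & u *m M = a) ->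
  homogeneous K.
Proof.
move=> Ksys isos x y Kx Ky; have [_ Kcone _ _ _] := Ksys.
have [sx sx0 [Kx' ux]] := interior_normalize Ksys Kx.
have [sy sy0 [Ky' uy]] := interior_normalize Ksys Ky.
have [Ma HMa uMa] := isos _ Kx' ux; have [Mb HMb uMb] := isos _ Ky' uy.
exists ((sy / sx) *: (invmx Ma *m Mb)); split.
  by apply: order_automorphismZ; [|exact: divr_gt0|exact: dual_order_iso_automorphism].
have Ma_u := HMa.1.
rewrite -scalemxAr mulmxA -[x](scalerKV (lt0r_neq0 sx0)) -uMa -scalemxAl mulmxK //.
rewrite -scalemxAl uMb !scalerA divfK ?lt0r_neq0 //.
by rewrite divff ?lt0r_neq0 // scale1r.
Qed.

Section Steering.
Variables (R : realType) (n m : nat).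
Variables (KA : 'rV[R]_n -> Prop) (KB : 'rV[R]_m -> Prop).

Lemma max_tensor_hat w f : is_closed KB -> convex_cone KB ->
  max_tensor KA KB w -> dual_cone KA f -> KB (hat w f).
Proof.
move=> KBcl KBcone w_pos Af; apply: contrapT => nKB.
have [g Bg g_neg] := cone_separation KBcl KBcone nKB.
by have := w_pos f g Af Bg; rewrite bilE leNgt g_neg.
Qed.

(* Steer the ensemble {t y, a - t y} of the marginal a, for t so small that
   a - t y stays in KB; the effect for t y, rescaled, hits y. *)
Lemma steers_hat_onto uA w : convex_cone KB -> steers KA uA KB w ->
  interior KB (marginalB uA w) ->
  forall y, KB y -> exists2 f, dual_cone KA f & hat w f = y.
Proof.
move=> KBcone w_steers [e e0 He] y KBy; have [_ _ KZ] := KBcone.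
have [t t0 Ht] := supdist_small_step y e0.
pose b (i : 'I_2) : 'rV[R]_m := if i == ord0 then t *: y else marginalB uA w - t *: y.
have Hb : ensemble KB (marginalB uA w) b.
  split=> [i|]; last by rewrite big_ord_recr big_ord1 /b /= addrC subrK.
  by rewrite /b; case: ifP => _; [exact: KZ (ltW t0) KBy | exact: He (Ht _).2].
have [x [[Ax _] xb]] := w_steers 2 b Hb.
exists (t^-1 *: x ord0); first by apply: dual_coneZ _ (Ax ord0); rewrite invr_ge0 ltW.
by rewrite /hat -scalemxAl [_ *m _]xb /b eqxx scalerA mulVf ?gt_eqF // scale1r.
Qed.

End Steering.

Lemma steering_state_dual_iso (R : realType) n (K : 'rV[R]_n -> Prop) u C w :
  is_sys K u -> is_composite K u K u C -> C w -> steers K u K w ->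
  interior K (marginalB u w) -> dual_order_iso K (vec_mx w).
Proof.
move=> [Kcl Kcone _ Kgen _] [_ _ Cmax] Cw w_steers Kmarg.
have onto := steers_hat_onto Kcone w_steers Kmarg.
have M_u : vec_mx w \in unitmx.
  by apply: generating_surj_unitmx Kgen _ => y /onto [f _ <-]; exists f.
split=> // f; split; first exact: max_tensor_hat Kcl Kcone (Cmax _ Cw).
by move=> /onto [f' Kf' /(can_inj (mulmxK M_u)) <-].
Qed.

Lemma self_steering_dual_isos (R : realType) (Th : theory R) n
    (K : 'rV[R]_n -> Prop) u :
  prob_theory Th -> universal_self_steering Th -> Th n K u ->
  forall a, interior K a -> pairing u a = 1 ->
    exists2 M, dual_order_iso K M & u *m M = a.
Proof.
move=> [Th_sys _] Th_steer ThK a Ka ua.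
have [C [w [compC _ [Cw _] w_marg w_steers]]] :=
  Th_steer _ _ _ ThK a (conj (interior_sub Ka) ua).
exists (vec_mx w) => //.
by apply: steering_state_dual_iso (Th_sys _ _ _ ThK) compC Cw w_steers _; rewrite w_marg.
Qed.

Lemma homogeneous_weakly_self_dual_rV0 (R : realType) (K : 'rV[R]_0 -> Prop) :
  K 0 -> homogeneous K /\ weakly_self_dual K.
Proof.
move=> K0; split.
  move=> x y _ _; exists 1%:M; split; last by rewrite !thinmx0.
  by split=> [|v]; rewrite ?unitmx1 ?mulmx1.
exists 1%:M; split=> [|f]; first exact: unitmx1.
by rewrite mulmx1 thinmx0; split=> // _ x _; rewrite /pairing big_ord0.
Qed.

Theorem proposition5p8 (R : realType) (Th : theory R) :
  prob_theory Th -> universal_self_steering Th ->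
  forall n (K : 'rV[R]_n -> Prop) (u : 'rV[R]_n),
    Th n K u -> irreducible K -> homogeneous K /\ weakly_self_dual K.
Proof.
move=> Th_prob Th_steer n K u ThK _.
have Ksys := Th_prob.1 _ _ _ ThK; have [_ [K0 _ _] _ _ _] := Ksys.
case: n K u ThK Ksys K0 => [|n] K u ThK Ksys K0.
  exact: homogeneous_weakly_self_dual_rV0.
have isos := self_steering_dual_isos Th_prob Th_steer ThK.
split; first exact: homogeneous_of_dual_isos Ksys isos.
have [a [Ka ua]] := interior_state_exists Ksys.
by have [M iso _] := isos a Ka ua; exists M.
Qed.
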